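(* Let $k\ge 2$, $q\in\{1,\dots,k-1\}$, $n\ge 3$ and $i\ge 1$ be integers, and let $\alpha(k)$ be the restricted period of the Fibonacci sequence modulo $k$. Consider the cylindrical Lights Out game on a board with $i$ rows and $n$ columns whose lights have $k$ states, with every light initially in the same state $k-q$. If $i\equiv 0 \pmod{\alpha(k)}$ or $i\equiv -1 \pmod{\alpha(k)}$, then the game is one-pass solvable.
   Context: Fibonacci numbers: $F_0=0$, $F_1=1$, $F_i=F_{i-1}+F_{i-2}$. The restricted period $\alpha(k)$ is the least positive integer $m$ such that $F_m\equiv 0\pmod k$. Cylindrical Lights Out game: a grid of buttons with $i$ rows (numbered $1,\dots,i$ from top to bottom) and $n$ columns, whose left and right sides are identified, so column $1$ and column $n$ are adjacent; rows do not wrap around. Each button has a light whose state is an element of $\mathbb{Z}/k\mathbb{Z}$, state $0$ meaning ''off''. Pressing a button once adds $1 \pmod k$ to the state of its own light and to the states of the lights orthogonally adjacent to it (above, below, left, right, where they exist, with columns taken cyclically). One-pass chasing: for $r=2,3,\dots,i$ in turn, press each button in row $r$ the number of times in $\{0,\dots,k-1\}$ needed to bring the light directly above it (in row $r-1$) to state $0$. The game is one-pass solvable if after this procedure all lights on the board are in state $0$. *)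

From mathcomp Require Import all_boot.
Unset Printing Implicit Defensive.

Fixpoint fib (m : nat) : nat :=
  match m with
  | 0 => 0
  | 1 => 1
  | (m'.+1 as p).+1 => fib p + fib m'
  end.

Definition is_restricted_period (k a : nat) : Prop :=
  [/\ 0 < a, k %| fib a & forall m, 0 < m < a -> ~~ (k %| fib m)].

(* Board of the cylindrical Lights Out game with i rows (numbered 1..i)
   and n columns (indexed by 'I_n, cyclically adjacent).
   A board state gives the light state (a natural number in [0, k)) of each
   button (row r, column c); values at rows outside 1..i are irrelevant. *)
Definition board (n : nat) := nat -> 'I_n -> nat.

Definition affects (i n : nat) (r : nat) (c : 'I_n) (r' : nat) (c' : 'I_n) : bool :=
  (0 < r' <= i) &&
  (((r' == r) && [|| c' == c, c' == ordS c | c' == ord_pred c])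
   || ((c' == c) && ((r' == r.+1) || (r'.+1 == r)))).

Definition press (k i n : nat) (r : nat) (c : 'I_n) (s : board n) : board n :=
  fun r' c' => if affects i n r c r' c' then (s r' c' + 1) %% k else s r' c'.

Definition needed (k x : nat) : nat := (k - x %% k) %% k.

Definition chase_button (k i n : nat) (s : board n) (r : nat) (c : 'I_n) : board n :=
  iter (needed k (s r.-1 c)) (press k i n r c) s.

Definition chase_row (k i n : nat) (s : board n) (r : nat) : board n :=
  foldl (fun s' c => chase_button k i n s' r c) s (enum 'I_n).

Definition one_pass_chase (k i n : nat) (s : board n) : board n :=
  foldl (chase_row k i n) s (iota 2 i.-1).

Definition one_pass_solvable (k i n : nat) (s : board n) : Prop :=
  forall (r : nat) (c : 'I_n), 0 < r <= i -> one_pass_chase k i n s r c = 0.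

Definition const_board (n x : nat) : board n := fun _ _ => x.

(* Chasing a constant board treats all columns alike: every button of row r
   is pressed the same number p_r of times, and before row r+2 is chased each
   light of row r+1 has received x + p_r + 3 p_(r+1) increments, so
   p_(r+2) = -(x + p_r + 3 p_(r+1)) mod k.  By Cassini's identity this
   recurrence is solved by p_r = (-1)^(r+1) F_(r-1) F_r x mod k.  After the
   chase only the last row i can be lit, in state x + p_(i-1) + 3 p_i, which is
   +-F_i F_(i+1) x mod k; it vanishes because alpha(k) divides i or i+1 and
   F_alpha divides every F_(m alpha). *)

From mathcomp Require Import all_boot all_algebra.
From mathcomp Require Import ring zify.
Import GRing.Theory.

Lemma fibSS m : fib m.+2 = fib m.+1 + fib m.
Proof. by []. Qed.

Lemma fib_addS m n : fib (m + n).+1 = fib m.+1 * fib n.+1 + fib m * fib n.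
Proof.
elim: m n => [|m IHm] n; first by rewrite add0n mul1n mul0n addn0.
by rewrite addSnnS IHm !fibSS; ring.
Qed.

Lemma dvdn_fib_mul d a t : d %| fib a -> d %| fib (a * t).
Proof.
case: a => [|a] d_fa; first by rewrite mul0n.
elim: t => [|t IHt]; first by rewrite muln0.
rewrite mulnS addnC addnS fib_addS.
by apply: dvdn_add; [apply: dvdn_mull | apply: dvdn_mulr].
Qed.

Section ChaseCoefficients.
Local Open Scope ring_scope.
Variable R : comRingType.

Lemma fib_cassini m :
  (fib m)%:R * (fib m.+2)%:R - (fib m.+1)%:R ^+ 2 = (-1) ^+ m.+1 :> R.
Proof.
elim: m => [|m IHm]; first by rewrite mul0r sub0r expr1 expr1n.
by rewrite [(-1) ^+ _]exprS -IHm !fibSS !natrD; ring.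
Qed.

Definition chase_coef (r : nat) : R := (-1) ^+ r.+1 * (fib r.-1 * fib r)%:R.

Lemma chase_coef_rec r :
  1 + chase_coef r + 3 * chase_coef r.+1 + chase_coef r.+2 = 0.
Proof.
rewrite /chase_coef; case: r => [|m]; first by rewrite /=; ring.
have cas := fib_cassini m.
rewrite !succnK !fibSS !natrM !natrD in cas *.
set a := (fib m)%:R in cas *; set b := (fib m.+1)%:R in cas *.
have signS j : (-1) ^+ j.+1 = - (-1) ^+ j :> R by rewrite exprS mulN1r.
have sign2 : (-1) ^+ m * (-1) ^+ m = 1 :> R.
  by rewrite -exprMn mulrNN mulr1 expr1n.
transitivity (1 + (-1) ^+ m * (a * (b + a) - b ^+ 2)); first by rewrite !signS; ring.
by rewrite cas signS mulrN sign2 subrr.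
Qed.
End ChaseCoefficients.

Arguments chase_coef {R} r.

Lemma needed_cancel k y : 0 < k -> (needed k y + y) %% k = 0.
Proof.
move=> k_gt0; rewrite /needed modnDml -modnDmr subnK ?modnn //.
exact/ltnW/ltn_pmod.
Qed.

Lemma needed_mod k y : needed k (y %% k) = needed k y.
Proof. by rewrite /needed modn_mod. Qed.

(* p_r of the header: the presses of each button of row r when chasing the
   constant board x. *)
Fixpoint row_presses (k x r : nat) : nat :=
  match r with
  | 0 | 1 => 0
  | (r'.+1 as r1).+1 => needed k (x + row_presses k x r' + 3 * row_presses k x r1)
  end.

Lemma row_pressesSS k x r :
  row_presses k x r.+2 = needed k (x + row_presses k x r + 3 * row_presses k x r.+1).
Proof. by []. Qed.

Section PressesModK.
Local Open Scope ring_scope.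

Lemma natr_needed k y : (1 < k)%N -> (needed k y)%:R = - y%:R :> 'Z_k.
Proof.
move=> k_gt1; apply/eqP; rewrite -subr_eq0 opprK -natrD.
by rewrite -Zp_nat_mod // needed_cancel ?(ltnW k_gt1).
Qed.

Lemma row_presses_Zp k x r : (1 < k)%N ->
  (row_presses k x r)%:R = x%:R * chase_coef r :> 'Z_k.
Proof.
move=> k_gt1.
suff: (row_presses k x r)%:R = x%:R * chase_coef r :> 'Z_k /\
      (row_presses k x r.+1)%:R = x%:R * chase_coef r.+1 :> 'Z_k by case.
elim: r => [|r [IHr IHr1]]; first by rewrite /chase_coef /= !mul0n !mulr0.
split=> //; rewrite row_pressesSS natr_needed // !natrD IHr IHr1 addr0.
by rewrite -[RHS]subr0 -(mulr0 x%:R) -(chase_coef_rec _ r); ring.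
Qed.

Lemma last_row_cleared k x r : (1 < k)%N -> (k %| fib r.+1 * fib r.+2)%N ->
  ((x + row_presses k x r + 3 * row_presses k x r.+1) %% k = 0)%N.
Proof.
move=> k_gt1 k_dvd; rewrite -(val_Zp_nat k_gt1).
suff -> : (x + row_presses k x r + 3 * row_presses k x r.+1)%:R = 0 :> 'Z_k by [].
transitivity (- x%:R * chase_coef r.+2 : 'Z_k).
  rewrite !natrD !row_presses_Zp // addr0.
  by rewrite -[LHS]subr0 -(mulr0 x%:R) -(chase_coef_rec _ r); ring.
have fib_prod0 : (fib r.+1 * fib r.+2)%:R = 0 :> 'Z_k.
  by rewrite -Zp_nat_mod // (eqP k_dvd).
by rewrite /chase_coef succnK fib_prod0 !mulr0.
Qed.

End PressesModK.

Definition nbhd {n} (c : 'I_n) : seq 'I_n := [:: c; ordS c; ord_pred c].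

Lemma val_ordS n (c : 'I_n) : ordS c = (if c.+1 == n then 0 else c.+1) :> nat.
Proof.
rewrite /ordS /=; case: eqP => [->|c1_neq_n]; first by rewrite modnn.
by rewrite modn_small //; have := ltn_ord c; lia.
Qed.

Lemma val_ord_pred n (c : 'I_n) :
  ord_pred c = (if c == 0 :> nat then n.-1 else c.-1) :> nat.
Proof.
rewrite /ord_pred /=; have := ltn_ord c; case: eqP => [->|c_neq0] c_lt_n.
  by rewrite add0n modn_small //; lia.
rewrite (_ : (c + n).-1 = c.-1 + n); last by lia.
by rewrite modnDr modn_small //; lia.
Qed.

Lemma nbhd_sym n (c c' : 'I_n) : (c' \in nbhd c) = (c \in nbhd c').
Proof.
have S_pred : (c' == ordS c) = (c == ord_pred c').
  by apply/eqP/eqP => [->|->]; rewrite ?ordSK ?ord_predK.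
have pred_S : (c' == ord_pred c) = (c == ordS c').
  by apply/eqP/eqP => [->|->]; rewrite ?ordSK ?ord_predK.
by rewrite !inE eq_sym S_pred pred_S; congr (_ || _); apply: orbC.
Qed.

Lemma nbhd_uniq [n] : 2 < n -> forall c : 'I_n, uniq (nbhd c).
Proof.
move=> n_gt2 c; rewrite /= !inE negb_or andbT -!(inj_eq (@ord_inj n)).
rewrite val_ordS val_ord_pred; have := ltn_ord c.
by case: (c.+1 =P n); case: (nat_of_ord c =P 0); lia.
Qed.

Lemma count_nbhd_cons n (c0 c : 'I_n) S : 2 < n -> c0 \notin S ->
  count (mem (c0 :: S)) (nbhd c) = count (mem S) (nbhd c) + (c \in nbhd c0).
Proof.
move=> n_gt2 c0_notin_S.
rewrite nbhd_sym -(count_uniq_mem _ (nbhd_uniq n_gt2 c)) addnC -count_predUI.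
rewrite (@eq_count _ (predI _ _) pred0) ?count_pred0 ?addn0; last first.
  by move=> y /=; apply/andP => -[/eqP -> ]; apply/negP.
by apply: eq_count => y; rewrite /= inE.
Qed.

Lemma affectsE i n r c r' (c' : 'I_n) : affects i n r c r' c' =
  (0 < r' <= i) && (if r' == r then c' \in nbhd c
                    else (c' == c) && ((r' == r.+1) || (r'.+1 == r))).
Proof.
rewrite /affects; case: eqP => [->|] //; rewrite !inE.
by case: (c' == c); rewrite /= ?orbF.
Qed.

Lemma iter_press k i n r c s r' c' m : s r' c' < k ->
  iter m (press k i n r c) s r' c' =
  if affects i n r c r' c' then (s r' c' + m) %% k else s r' c'.
Proof.
move=> s_lt_k; elim: m => [|m IHm]; first by case: ifP; rewrite // addn0 modn_small.
rewrite iterS {1}/press IHm; case: affects => //.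
by rewrite modnDml addn1 addnS.
Qed.

Ltac decide_nat_tests := repeat match goal with
  | |- context [?a == ?b] =>
      let T := type of a in unify T nat;
      first [ rewrite (_ : (a == b) = true); last by lia
            | rewrite (_ : (a == b) = false); last by lia ]
  | |- context [?a <= ?b] =>
      first [ rewrite (_ : (a <= b) = true); last by lia
            | rewrite (_ : (a <= b) = false); last by lia ]
  end.

Definition agrees_on_rows i n (s : board n) (f : nat -> 'I_n -> nat) :=
  forall r c, 0 < r <= i -> s r c = f r c.

Section OnePassChase.
Variables k i n x : nat.
Hypotheses (n_gt2 : 2 < n) (k_gt0 : 0 < k) (x_lt_k : x < k).
Local Notation p := (row_presses k x).
Local Notation agrees := (agrees_on_rows i n).

Definition chased_upto (r r' : nat) (_ : 'I_n) : nat :=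
  if r' < r then 0
  else if r' == r then (x + p r.-1 + 3 * p r) %% k
  else if r' == r.+1 then (x + p r) %% k
  else x.

(* The board while row j.+2 is being chased, S being the buttons of that row
   already processed. *)
Definition chasing_row (j : nat) (S : seq 'I_n) (r' : nat) (c' : 'I_n) : nat :=
  if r' <= j then 0
  else if r' == j.+1 then (if c' \in S then 0 else (x + p j + 3 * p j.+1) %% k)
  else if r' == j.+2 then (x + p j.+1 + p j.+2 * count (mem S) (nbhd c')) %% k
  else if r' == j.+3 then (x + p j.+2 * (c' \in S)) %% k
  else x.

Lemma chasing_row_lt_k j S r' c' : chasing_row j S r' c' < k.
Proof. by rewrite /chasing_row; repeat case: ifP => _; rewrite ?ltn_pmod. Qed.

Lemma chase_button_step j S s c0 : j.+2 <= i -> c0 \notin S ->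
  agrees s (chasing_row j S) ->
  agrees (chase_button k i n s j.+2 c0) (chasing_row j (c0 :: S)).
Proof.
move=> j2_le_i c0_notin_S s_agrees r' c' r'_in.
(* The earlier presses of row j.+2 left the light above c0 untouched. *)
have above_c0 : s j.+2.-1 c0 = (x + p j + 3 * p j.+1) %% k.
  by rewrite s_agrees /chasing_row; decide_nat_tests; rewrite ?(negbTE c0_notin_S).
rewrite /chase_button above_c0 iter_press ?s_agrees ?chasing_row_lt_k //.
rewrite needed_mod -row_pressesSS affectsE r'_in /chasing_row.
have cleared : (x + p j + 3 * p j.+1 + p j.+2) %% k = 0.
  by rewrite addnC row_pressesSS needed_cancel.
have [r'_le_j|r'_gt_j] := leqP r' j; first by decide_nat_tests; rewrite ?andbF.
case: (r' =P j.+1) => [r'_eq1|r'_neq1].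
  decide_nat_tests; rewrite in_cons.
  case: (c' =P c0) => [->|_] /=; last by case: (c0 \in S).
  by rewrite (negbTE c0_notin_S) modnDml.
case: (r' =P j.+2) => [r'_eq2|r'_neq2].
  decide_nat_tests; rewrite count_nbhd_cons //.
  case: (c' \in nbhd c0); last by rewrite addn0.
  by rewrite modnDml mulnDr muln1 addnA.
case: (r' =P j.+3) => [r'_eq3|r'_neq3].
  decide_nat_tests; rewrite andbT in_cons (eq_sym c').
  case: (c0 =P c') => [<-|_] //.
  by rewrite (negbTE c0_notin_S) modnDml muln0 muln1 addn0.
by decide_nat_tests; rewrite andbF.
Qed.

Lemma chase_buttons_step j (l S : seq 'I_n) s : j.+2 <= i ->
  uniq l -> all (fun c => c \notin S) l -> agrees s (chasing_row j S) ->
  agrees (foldl (fun s' c => chase_button k i n s' j.+2 c) s l)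
         (chasing_row j (catrev l S)).
Proof.
move=> j2_le_i; elim: l S s => [|c0 l IHl] S s //= /andP[c0_notin_l l_uniq].
case/andP=> c0_notin_S l_notin_S s_agrees.
apply: IHl => //; last exact: chase_button_step.
apply/allP=> c c_in_l; rewrite in_cons negb_or (allP l_notin_S c c_in_l).
by rewrite andbT; apply: contraNneq c0_notin_l => <-.
Qed.

Lemma chasing_row_start j s : agrees s (chased_upto j.+1) -> agrees s (chasing_row j [::]).
Proof.
move=> s_agrees r' c' r'_in; rewrite s_agrees // /chased_upto /chasing_row.
have [r'_le_j|r'_gt_j] := leqP r' j; first by decide_nat_tests.
case: (r' =P j.+1) => [r'_eq1|r'_neq1]; first by decide_nat_tests.
case: (r' =P j.+2) => [r'_eq2|r'_neq2]; first by decide_nat_tests; rewrite muln0 addn0.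
case: (r' =P j.+3) => [r'_eq3|r'_neq3]; last by decide_nat_tests.
by decide_nat_tests; rewrite muln0 addn0 modn_small.
Qed.

Lemma chasing_row_end j S s : (forall c, c \in S) ->
  agrees s (chasing_row j S) -> agrees s (chased_upto j.+2).
Proof.
move=> S_full s_agrees r' c' r'_in; rewrite s_agrees // /chased_upto /chasing_row.
have [r'_le_j|r'_gt_j] := leqP r' j; first by decide_nat_tests.
case: (r' =P j.+1) => [r'_eq1|r'_neq1]; first by decide_nat_tests; rewrite S_full.
case: (r' =P j.+2) => [r'_eq2|r'_neq2].
  by decide_nat_tests; rewrite (@eq_count _ _ predT) ?count_predT 1?mulnC.
case: (r' =P j.+3) => [r'_eq3|r'_neq3]; last by decide_nat_tests.
by decide_nat_tests; rewrite S_full muln1.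
Qed.

Lemma chase_row_step j s : j.+2 <= i ->
  agrees s (chased_upto j.+1) -> agrees (chase_row k i n s j.+2) (chased_upto j.+2).
Proof.
move=> j2_le_i s_agrees; apply: (@chasing_row_end _ (rev (enum 'I_n))).
  by move=> c; rewrite mem_rev mem_enum.
apply: chase_buttons_step; rewrite ?enum_uniq //; first exact/allP.
exact: chasing_row_start.
Qed.

Lemma chased_upto_const : agrees (const_board n x) (chased_upto 1).
Proof.
move=> r' c' /andP[r'_gt0 _]; rewrite /const_board /chased_upto ltnNge r'_gt0 /=.
by case: ifP => _; last case: ifP => _; rewrite /= ?addn0 ?muln0 ?modn_small.
Qed.

Lemma chase_rows_const m : m < i ->
  agrees (foldl (chase_row k i n) (const_board n x) (iota 2 m)) (chased_upto m.+1).
Proof.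
elim: m => [|m IHm] m_lt_i; first exact: chased_upto_const.
rewrite -[X in iota _ X]addn1 iotaD foldl_cat add2n /=.
by apply: chase_row_step => //; apply: IHm; apply: ltnW.
Qed.

Lemma one_pass_chase_const : 0 < i ->
  agrees (one_pass_chase k i n (const_board n x)) (chased_upto i).
Proof.
move=> i_gt0; rewrite /one_pass_chase -[X in chased_upto X](prednK i_gt0).
by apply: chase_rows_const; rewrite prednK.
Qed.

End OnePassChase.

Theorem theorem3 (k q n i a : nat) :
  2 <= k -> 1 <= q <= k - 1 -> 3 <= n -> 1 <= i ->
  is_restricted_period k a ->
  (i %% a = 0 \/ i.+1 %% a = 0) ->
  one_pass_solvable k i n (const_board n (k - q)).
Proof.
move=> k_ge2 q_range n_ge3 i_gt0 [_ k_dvd_fa _] i_mod_a r c r_in.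
have [k_gt0 x_lt_k] : 0 < k /\ k - q < k by lia.
have k_dvd_fib t : a %| t -> k %| fib t.
  by case/dvdnP=> u ->; rewrite mulnC; apply: dvdn_fib_mul.
rewrite (one_pass_chase_const _ _ _ _ n_ge3 k_gt0 x_lt_k) // /chased_upto.
case: ltnP => // r_ge_i; have -> : r == i by lia.
case: i i_gt0 i_mod_a {r_in r_ge_i} => [|i] // _ i_mod_a.
rewrite succnK last_row_cleared //.
by case: i_mod_a => /eqP i_mod_a; [apply: dvdn_mulr | apply: dvdn_mull]; apply: k_dvd_fib.
Qed.
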